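(* Work in Scenario 1. For a profile of reported types $\mathbf t=(t_1,\dots,t_n)\in T$ (all bidders participating) and $i,j\in N$ with $j\ne i$, define $$W_j(\mathbf t)=v_j-\sum_{k\in N\setminus\{j\}}\eta_{k\leftarrow j},\qquad W_j^{-i}(\mathbf t)=v_j-\sum_{k\in N\setminus\{i,j\}}\eta_{k\leftarrow j},$$ where $\eta_{k\leftarrow j}$ is the value reported by bidder $k$. Consider the mechanism $x_j(\mathbf t)=\mathbf 1\{W_j(\mathbf t)\ge 0\}$ for all $j$; $$p_i(\mathbf t)=\sum_{j\in N\setminus\{i\}}\Big[W_j^{-i}(\mathbf t)\big(\mathbf 1\{W_j^{-i}(\mathbf t)\ge0\}-\mathbf 1\{W_j(\mathbf t)\ge0\}\big)+\eta_{j\leftarrow i}\,\mathbf 1\{W_i(\mathbf t)\ge0\}\Big];$$ and, when bidder $i$ does not participate, $x_i(\emptyset,\mathbf t_{-i})=p_i(\emptyset,\mathbf t_{-i})=0$ and $x_j(\emptyset,\mathbf t_{-i})=\mathbf 1\{W_j^{-i}(\mathbf t)\ge0\}$ for $j\neq i$. Then: (a) for every $\mathbf t\in T$, $\mathbf x(\mathbf t)$ maximizes the social welfare $\mathrm{SW}(\mathbf z;\mathbf t)=\sum_{i\in N}\nu_i(\mathbf z)$ over $\mathbf z\in[0,1]^n$; (b) the mechanism is DSIC; (c) it is ex-post IR; (d) $p_i(\mathbf t)\ge0$ for all $i\in N$ and $\mathbf t\in T$.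
   Context: Model: there are $n$ bidders $N=\{1,\dots,n\}$ and a seller of a freely replicable good; an allocation is any $\mathbf x=(x_1,\dots,x_n)\in[0,1]^n$ (no constraint coupling coordinates). Bidder $i$ has a value $v_i\in[\underline v_i,\bar v_i]\subset\mathbb R_{\ge0}$ and, for each $j\ne i$, an externality parameter $\eta_{i\leftarrow j}\in[\underline\eta_{i\leftarrow j},\bar\eta_{i\leftarrow j}]\subset\mathbb R_{\ge0}$; her valuation is $\nu_i(\mathbf x)=v_ix_i-\sum_{j\ne i}\eta_{i\leftarrow j}x_j$ and her utility with payment $p_i$ is $u_i(\mathbf x,p_i;\mathbf t)=\nu_i(\mathbf x)-p_i$ (evaluated at the true parameters). In Scenario 1, bidder $i$'s private type is $t_i=(v_i,(\eta_{i\leftarrow j})_{j\ne i})\in T_i=[\underline v_i,\bar v_i]\times\prod_{j\ne i}[\underline\eta_{i\leftarrow j},\bar\eta_{i\leftarrow j}]$; $T=\prod_iT_i$. Bids lie in $B_i=T_i\cup\{\emptyset\}$ ($\emptyset$ = non-participation). A mechanism is an allocation function $\mathbf x:B\to[0,1]^n$ and payment function $\mathbf p:B\to\mathbb R^n_{\ge0}$ with $x_i=p_i=0$ whenever bidder $i$ bids $\emptyset$; it is specified on bid profiles with at most one $\emptyset$. DSIC: for all $\mathbf t,\hat{\mathbf t}\in T$ and $i$, $u_i(\mathbf x(t_i,\hat{\mathbf t}_{-i}),p_i(t_i,\hat{\mathbf t}_{-i});\mathbf t)\ge u_i(\mathbf x(\hat{\mathbf t}),p_i(\hat{\mathbf t});\mathbf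 t)$. Ex-post IR: for all $\mathbf t\in T$ and $i$, $u_i(\mathbf x(\mathbf t),p_i(\mathbf t);\mathbf t)\ge u_i(\mathbf x(\emptyset,\mathbf t_{-i}),p_i(\emptyset,\mathbf t_{-i});\mathbf t)$. *)

From HB Require Import structures.
From mathcomp Require Import all_boot all_order all_algebra.
Set Implicit Arguments. Unset Strict Implicit. Unset Printing Implicit Defensive.
Import Order.TTheory GRing.Theory Num.Theory.
Local Open Scope ring_scope.

(* A (reported) type profile of n bidders is a pair (v, eta) with
   v i = v_i and eta i j = eta_{i <- j} (for j <> i; eta i i is never used). *)

Section Defs.
Variable R : realFieldType.
Variable n : nat.
Implicit Types (v : 'I_n -> R) (eta : 'I_n -> 'I_n -> R) (z : 'I_n -> R).

Definition ind (b : bool) : R := if b then 1 else 0.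

Definition valuation v eta (i : 'I_n) z : R :=
  v i * z i - \sum_(j < n | j != i) eta i j * z j.

Definition SW v eta z : R := \sum_(i < n) valuation v eta i z.

Definition W v eta (j : 'I_n) : R := v j - \sum_(k < n | k != j) eta k j.

Definition Wm v eta (i j : 'I_n) : R :=
  v j - \sum_(k < n | (k != i) && (k != j)) eta k j.

Definition alloc v eta : 'I_n -> R := fun j => ind (0 <= W v eta j).

Definition pay v eta (i : 'I_n) : R :=
  \sum_(j < n | j != i)
     (Wm v eta i j * (ind (0 <= Wm v eta i j) - ind (0 <= W v eta j))
      + eta j i * ind (0 <= W v eta i)).

Definition alloc_out v eta (i : 'I_n) : 'I_n -> R :=
  fun j => if j == i then 0 else ind (0 <= Wm v eta i j).

Definition pay_out v eta (i : 'I_n) : R := 0.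

Definition utility v eta (i : 'I_n) (x : 'I_n -> R) (p : R) : R :=
  valuation v eta i x - p.

Definition inT (vlo vhi : 'I_n -> R) (elo ehi : 'I_n -> 'I_n -> R) v eta : Prop :=
  forall i : 'I_n, vlo i <= v i <= vhi i /\
    (forall j : 'I_n, j != i -> elo i j <= eta i j <= ehi i j).

Definition updv (i : 'I_n) v vh : 'I_n -> R :=
  fun k => if k == i then v k else vh k.
Definition upde (i : 'I_n) eta etah : 'I_n -> 'I_n -> R :=
  fun k => if k == i then eta k else etah k.

End Defs.

(* The mechanism is VCG with Clarke pivots.  Since the good is freely replicable and valuations are
   linear, social welfare is [\sum_j z_j W_j], maximized coordinatewise by [z_j = 1{W_j >= 0}].
   Bidder i's utility when reporting [t'] is her true contribution plus the others' welfare
   (computed with her true externalities) minus the pivot [h_i], the optimal welfare of the others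
   without i; [h_i] does not depend on i's report and the rest is maximized by truthful reporting,
   as each summand is of the form [1{b} * x <= 1{x >= 0} * x]. *)
From HB Require Import structures.
From mathcomp Require Import all_boot all_order all_algebra.
From mathcomp Require Import ring lra.
Import Order.TTheory GRing.Theory Num.Theory.
Local Open Scope ring_scope.

Section IndicatorBounds.
Variable R : realFieldType.

Lemma ind_ge0 (b : bool) : 0 <= ind R b.
Proof. by rewrite /ind; case: b. Qed.

Lemma ind_le1 (b : bool) : ind R b <= 1.
Proof. by rewrite /ind; case: b. Qed.

Lemma mul_le_ind_ge0 (z x : R) : 0 <= z <= 1 -> z * x <= ind R (0 <= x) * x.
Proof. by move=> /andP[z0 z1]; rewrite /ind; case: (lerP 0 x) => x0; nra. Qed.

Lemma ind_mul_le (b : bool) (x : R) : ind R b * x <= ind R (0 <= x) * x.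
Proof. by apply: mul_le_ind_ge0; rewrite ind_ge0 ind_le1. Qed.

Lemma ind_ge0_mul_ge0 (x : R) : 0 <= ind R (0 <= x) * x.
Proof. by have := ind_mul_le false x; rewrite /ind mul0r. Qed.

End IndicatorBounds.

Section Mechanism.
Variables (R : realFieldType) (n : nat).
Implicit Types (v : 'I_n -> R) (e : 'I_n -> 'I_n -> R) (z : 'I_n -> R).

(* The Clarke pivot [h_i]: the welfare of the others under the allocation without i. *)
Definition pivot v e (i : 'I_n) : R :=
  \sum_(j < n | j != i) Wm v e i j * ind R (0 <= Wm v e i j).

Lemma W_Wm v e {i j : 'I_n} : j != i -> W v e j = Wm v e i j - e i j.
Proof.
move=> ji; rewrite /W /Wm (bigD1 i) /=; last by rewrite eq_sym.
rewrite (eq_bigl (fun k => (k != i) && (k != j))); first by ring.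
by move=> k /=; rewrite andbC.
Qed.

Lemma SW_W v e z : SW v e z = \sum_(j < n) z j * W v e j.
Proof.
rewrite /SW /valuation /W sumrB.
have -> : \sum_(i < n) \sum_(j < n | j != i) e i j * z j =
          \sum_(j < n) \sum_(i < n | i != j) e i j * z j.
  under eq_bigr do rewrite big_mkcond /=.
  rewrite exchange_big /=; apply: eq_bigr => j _.
  by rewrite [RHS]big_mkcond /=; apply: eq_bigr => i _; rewrite eq_sym.
rewrite -sumrB; apply: eq_bigr => j _.
rewrite mulrBr mulr_sumr mulrC; congr (_ - _).
by apply: eq_bigr => k _; rewrite mulrC.
Qed.

Lemma alloc_SW_max v e z : (forall j, 0 <= z j <= 1) -> SW v e z <= SW v e (alloc v e).
Proof. by move=> z01; rewrite !SW_W; apply: ler_sum => j _; apply: mul_le_ind_ge0. Qed.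

Lemma utility_allocE v e v' e' (i : 'I_n) :
  utility v e i (alloc v' e') (pay v' e' i) =
  ind R (0 <= W v' e' i) * (v i - \sum_(j < n | j != i) e' j i)
  + \sum_(j < n | j != i) ind R (0 <= W v' e' j) * (Wm v' e' i j - e i j)
  - pivot v' e' i.
Proof.
rewrite /utility /valuation /pay /pivot /alloc big_split /= -mulr_suml.
set a := fun j => ind R (0 <= W v' e' j); set w := Wm v' e' i.
set b := fun j => ind R (0 <= w j).
have -> : \sum_(j < n | j != i) a j * (w j - e i j)
    = \sum_(j < n | j != i) a j * w j - \sum_(j < n | j != i) e i j * a j.
  by rewrite -sumrB; apply: eq_bigr => j _; ring.
have -> : \sum_(j < n | j != i) w j * (b j - a j)
    = \sum_(j < n | j != i) w j * b j - \sum_(j < n | j != i) a j * w j.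
  by rewrite -sumrB; apply: eq_bigr => j _; ring.
ring.
Qed.

Section Deviation.
Variables (v vh : 'I_n -> R) (e eh : 'I_n -> 'I_n -> R) (i : 'I_n).
Let vs := updv i v vh.
Let es := upde i e eh.

Lemma Wm_upd (j : 'I_n) : j != i -> Wm vs es i j = Wm vh eh i j.
Proof.
move=> ji; rewrite /Wm /vs /es /updv /upde (negbTE ji); congr (_ - _).
by apply: eq_bigr => k /andP[ki _]; rewrite (negbTE ki).
Qed.

Lemma pivot_upd : pivot vs es i = pivot vh eh i.
Proof. by apply: eq_bigr => j ji; rewrite Wm_upd. Qed.

Lemma sum_upd_col : \sum_(j < n | j != i) es j i = \sum_(j < n | j != i) eh j i.
Proof. by apply: eq_bigr => j ji; rewrite /es /upde (negbTE ji). Qed.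

Lemma W_upd_self : W vs es i = v i - \sum_(j < n | j != i) eh j i.
Proof. by rewrite /W sum_upd_col /vs /updv eqxx. Qed.

Lemma W_upd (j : 'I_n) : j != i -> W vs es j = Wm vh eh i j - e i j.
Proof. by move=> ji; rewrite (W_Wm _ _ ji) Wm_upd // /es /upde eqxx. Qed.

Lemma truthful_dominant :
  utility v e i (alloc vh eh) (pay vh eh i) <= utility v e i (alloc vs es) (pay vs es i).
Proof.
rewrite !utility_allocE sum_upd_col W_upd_self pivot_upd lerD2r.
apply: lerD; first exact: ind_mul_le.
apply: ler_sum => j ji; rewrite W_upd // Wm_upd //; exact: ind_mul_le.
Qed.

End Deviation.

Lemma participation_rational v e (i : 'I_n) :
  utility v e i (alloc_out v e i) (pay_out v e i) <= utility v e i (alloc v e) (pay v e i).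
Proof.
rewrite utility_allocE /utility /valuation /pay_out /alloc_out eqxx mulr0 sub0r subr0.
rewrite -[v i - _]/(W v e i) /pivot.
have out_value : - \sum_(j < n | j != i) e i j * (if j == i then 0 else ind R (0 <= Wm v e i j))
    = \sum_(j < n | j != i) ind R (0 <= Wm v e i j) * W v e j
      - \sum_(j < n | j != i) Wm v e i j * ind R (0 <= Wm v e i j).
  rewrite -sumrB -sumrN; apply: eq_bigr => j ji; rewrite (negbTE ji) (W_Wm _ _ ji); ring.
rewrite out_value.
have others : \sum_(j < n | j != i) ind R (0 <= Wm v e i j) * W v e j
    <= \sum_(j < n | j != i) ind R (0 <= W v e j) * (Wm v e i j - e i j).
  by apply: ler_sum => j ji; rewrite -(W_Wm _ _ ji); exact: ind_mul_le.
have := ind_ge0_mul_ge0 _ (W v e i); lra.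
Qed.

Lemma pay_ge0 v e (i : 'I_n) : (forall j k, k != j -> 0 <= e j k) -> 0 <= pay v e i.
Proof.
move=> e0; apply: sumr_ge0 => j ji; apply: addr_ge0; last first.
  by apply: mulr_ge0; [apply: e0; rewrite eq_sym | apply: ind_ge0].
have := W_Wm v e ji; have := e0 i j ji.
by rewrite /ind; case: (lerP 0 (Wm v e i j)); case: (lerP 0 (W v e j)); nra.
Qed.

End Mechanism.

Lemma inT_eta_ge0 (R : realFieldType) (n : nat) (vlo vhi : 'I_n -> R)
  (elo ehi : 'I_n -> 'I_n -> R) (v : 'I_n -> R) (e : 'I_n -> 'I_n -> R) :
  (forall i j, j != i -> 0 <= elo i j) -> inT vlo vhi elo ehi v e ->
  forall i j, j != i -> 0 <= e i j.
Proof.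
move=> elo0 hT i j ji; have [_ /(_ j ji) /andP[loe _]] := hT i.
exact: le_trans (elo0 i j ji) loe.
Qed.

Theorem mainTheorem3 (R : realFieldType) (n : nat)
  (vlo vhi : 'I_n -> R) (elo ehi : 'I_n -> 'I_n -> R)
  (hvlo : forall i, 0 <= vlo i) (hv : forall i, vlo i <= vhi i)
  (helo : forall i j, j != i -> 0 <= elo i j)
  (he : forall i j, j != i -> elo i j <= ehi i j) :
  (* (a) efficiency *)
  (forall v eta, inT vlo vhi elo ehi v eta ->
     forall z : 'I_n -> R, (forall j, 0 <= z j <= 1) ->
       SW v eta z <= SW v eta (alloc v eta)) /\
  (* (b) DSIC *)
  (forall v eta vh etah,
     inT vlo vhi elo ehi v eta -> inT vlo vhi elo ehi vh etah ->
     forall i : 'I_n,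
       utility v eta i (alloc vh etah) (pay vh etah i)
       <= utility v eta i (alloc (updv i v vh) (upde i eta etah))
                          (pay (updv i v vh) (upde i eta etah) i)) /\
  (* (c) ex-post IR *)
  (forall v eta, inT vlo vhi elo ehi v eta ->
     forall i : 'I_n,
       utility v eta i (alloc_out v eta i) (pay_out v eta i)
       <= utility v eta i (alloc v eta) (pay v eta i)) /\
  (* (d) nonnegative payments *)
  (forall v eta, inT vlo vhi elo ehi v eta ->
     forall i : 'I_n, 0 <= pay v eta i).
Proof.
split; first by move=> v eta _ z; apply: alloc_SW_max.
split; first by move=> v eta vh etah _ _ i; apply: truthful_dominant.
split; first by move=> v eta _ i; apply: participation_rational.
by move=> v eta hT i; apply: pay_ge0; apply: inT_eta_ge0 hT.
Qed.
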